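(* Let $0<t_1<t_2<t_3<t_4<t_5$ be real numbers and let $p_i=(t_i,t_i^2,t_i^3,t_i^4)\in\mathbb{R}^4$ for $1\le i\le 5$. Then the unique $3$-sphere in $\mathbb{R}^4$ passing through $p_1,\dots,p_5$ has the following property: for every $t\in(t_1,t_2)\cup(t_3,t_4)\cup(t_5,\infty)$, the point $(t,t^2,t^3,t^4)$ lies strictly outside the sphere, i.e., its distance from the center of the sphere is strictly greater than the radius.
   Context: The moment curve in $\mathbb{R}^d$ is the curve $t\mapsto(t,t^2,\dots,t^d)$ for $t>0$. A $3$-sphere in $\mathbb{R}^4$ is the set of points at a fixed distance (the radius) from a fixed point (the center). *)

From Stdlib Require Import Reals.
Open Scope R_scope.

Definition R4 : Type := (R * R * R * R)%type.

Definition moment (t : R) : R4 := (t, t ^ 2, t ^ 3, t ^ 4).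

Definition dist4 (p q : R4) : R :=
  match p, q with
  | (p1, p2, p3, p4), (q1, q2, q3, q4) =>
      sqrt ((p1 - q1) ^ 2 + (p2 - q2) ^ 2 + (p3 - q3) ^ 2 + (p4 - q4) ^ 2)
  end.

Definition on_sphere (c : R4) (r : R) (p : R4) : Prop := dist4 p c = r.

From Stdlib Require Import Reals Lra Lia Psatz List.
Import ListNotations.
Open Scope R_scope.

(* For a center c and radius r, the power |γ(t) - c|^2 - r^2 of the point γ(t) of the
   moment curve is t^8 + t^6 + (1 - 2 c4) t^4 - 2 c3 t^3 + (1 - 2 c2) t^2 - 2 c1 t + |c|^2 - r^2,
   so its coefficients of degree at most 4 determine c and r^2. Two spheres through
   γ(t1), ..., γ(t5) therefore differ by a polynomial of degree at most 4 with five roots,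
   hence coincide. Conversely, for P(t) = (t - t1) ... (t - t5) there is a unique monic
   cubic Q for which P Q has the shape above, and this yields the sphere. When all t_i > 0
   the coefficients of Q are positive, so for t > 0 the power has the sign of P, which is
   positive exactly on (t1, t2), (t3, t4) and (t5, +oo). *)

Fixpoint horner (l : list R) (x : R) : R :=
  match l with
  | [] => 0
  | a :: l' => a + x * horner l' x
  end.

(* Synthetic division: [ruffini a l] is the quotient of [b :: l] by [x - a], whatever [b]. *)
Fixpoint ruffini (a : R) (l : list R) : list R :=
  match l with
  | [] => []
  | b :: l' => horner l a :: ruffini a l'
  end.

Lemma ruffini_length a l : length (ruffini a l) = length l.
Proof. induction l as [|b l IH]; simpl; congruence. Qed.

Lemma horner_sub_ruffini a b l x :
  horner (b :: l) x - horner (b :: l) a = (x - a) * horner (ruffini a l) x.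
Proof.
  revert b; induction l as [|c l IH]; intro b; [simpl; ring|].
  specialize (IH c).
  transitivity (x * (horner (c :: l) x - horner (c :: l) a)
                + (x - a) * horner (c :: l) a); [simpl; ring|].
  rewrite IH; simpl; ring.
Qed.

Lemma horner_eq0 l x : Forall (fun c => c = 0) l -> horner l x = 0.
Proof. induction 1 as [|c l Hc _ IH]; simpl; [reflexivity|]. rewrite Hc, IH; ring. Qed.

Lemma ruffini_eq0 a l :
  Forall (fun c => c = 0) (ruffini a l) -> Forall (fun c => c = 0) l.
Proof.
  induction l as [|b l IH]; simpl; intro Hq; [constructor|].
  apply Forall_cons_iff in Hq as [Hb Hq].
  pose proof (IH Hq) as Hl.
  constructor; [|exact Hl].
  simpl in Hb. rewrite (horner_eq0 l a Hl) in Hb. lra.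
Qed.

Lemma horner_roots_eq0 (xs : list R) : NoDup xs ->
  forall l, (length l <= length xs)%nat -> (forall x, In x xs -> horner l x = 0) ->
  Forall (fun c => c = 0) l.
Proof.
  induction xs as [|a xs IH]; intros Hxs l Hlen Hroots.
  - destruct l; [constructor | simpl in Hlen; lia].
  - destruct l as [|b l]; [constructor|].
    apply NoDup_cons_iff in Hxs as [Ha Hxs].
    assert (Hq : Forall (fun c => c = 0) (ruffini a l)).
    { apply IH; [exact Hxs | rewrite ruffini_length; simpl in Hlen; lia |].
      intros x Hx.
      assert (Hxa : x - a <> 0) by (intro E; apply Ha; replace a with x by lra; exact Hx).
      apply (Rmult_eq_reg_l (x - a)); [|exact Hxa].
      rewrite <- (horner_sub_ruffini a b l x), !Hroots; simpl; auto; ring. }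
    apply ruffini_eq0 in Hq as Hl.
    constructor; [|exact Hl].
    pose proof (Hroots a (or_introl eq_refl)) as Hb; simpl in Hb.
    rewrite (horner_eq0 l a Hl) in Hb. lra.
Qed.

Definition sqdist4 (p q : R4) : R :=
  match p, q with
  | (p1, p2, p3, p4), (q1, q2, q3, q4) =>
      (p1 - q1) ^ 2 + (p2 - q2) ^ 2 + (p3 - q3) ^ 2 + (p4 - q4) ^ 2
  end.

Lemma dist4_sqdist4 p q : dist4 p q = sqrt (sqdist4 p q).
Proof. destruct p as [[[? ?] ?] ?], q as [[[? ?] ?] ?]; reflexivity. Qed.

Lemma sqdist4_ge0 p q : 0 <= sqdist4 p q.
Proof.
  destruct p as [[[p1 p2] p3] p4], q as [[[q1 q2] q3] q4]; simpl.
  pose proof (pow2_ge_0 (p1 - q1)); pose proof (pow2_ge_0 (p2 - q2)).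
  pose proof (pow2_ge_0 (p3 - q3)); pose proof (pow2_ge_0 (p4 - q4)); lra.
Qed.

Lemma on_sphere_sqdist4 c r p : 0 <= r -> on_sphere c r p <-> sqdist4 p c = r ^ 2.
Proof.
  intro Hr; unfold on_sphere; rewrite dist4_sqdist4; split; intro E.
  - rewrite <- E, pow2_sqrt; [reflexivity | apply sqdist4_ge0].
  - rewrite E, sqrt_pow2; [reflexivity | exact Hr].
Qed.

Lemma dist4_gt c r p : 0 <= r -> r ^ 2 < sqdist4 p c -> dist4 p c > r.
Proof.
  intros Hr Hlt; rewrite dist4_sqdist4, <- (sqrt_pow2 r Hr).
  apply sqrt_lt_1; [apply pow2_ge_0 | apply sqdist4_ge0 | exact Hlt].
Qed.

Lemma moment_sphere_unique (ts : list R) (c c' : R4) (r r' : R) :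
  NoDup ts -> (5 <= length ts)%nat -> 0 <= r -> 0 <= r' ->
  (forall t, In t ts -> on_sphere c r (moment t)) ->
  (forall t, In t ts -> on_sphere c' r' (moment t)) ->
  c' = c /\ r' = r.
Proof.
  intros Hts Hlen Hr Hr' Hon Hon'.
  destruct c as [[[c1 c2] c3] c4], c' as [[[d1 d2] d3] d4].
  set (l := [(d1^2 + d2^2 + d3^2 + d4^2 - r'^2) - (c1^2 + c2^2 + c3^2 + c4^2 - r^2);
             2 * (c1 - d1); 2 * (c2 - d2); 2 * (c3 - d3); 2 * (c4 - d4)]).
  assert (Hpow : forall t, horner l t =
    (sqdist4 (moment t) (d1, d2, d3, d4) - r' ^ 2)
    - (sqdist4 (moment t) (c1, c2, c3, c4) - r ^ 2)).
  { intro t; unfold l; simpl; ring. }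
  assert (Hl : Forall (fun a => a = 0) l).
  { apply (horner_roots_eq0 ts Hts); [exact Hlen|].
    intros t Ht.
    rewrite Hpow, (proj1 (on_sphere_sqdist4 _ _ _ Hr) (Hon t Ht)),
      (proj1 (on_sphere_sqdist4 _ _ _ Hr') (Hon' t Ht)); ring. }
  unfold l in Hl; rewrite !Forall_cons_iff in Hl.
  destruct Hl as (Hk & Hc1 & Hc2 & Hc3 & Hc4 & _).
  assert (d1 = c1) by lra; assert (d2 = c2) by lra; assert (d3 = c3) by lra;
    assert (d4 = c4) by lra; subst.
  split; [reflexivity | nra].
Qed.

Section MomentSphere.

Variables t1 t2 t3 t4 t5 : R.

Let e1 := t1 + t2 + t3 + t4 + t5.
Let e2 := t1*t2 + t1*t3 + t1*t4 + t1*t5 + t2*t3 + t2*t4 + t2*t5 + t3*t4 + t3*t5 + t4*t5.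
Let e3 := t1*t2*t3 + t1*t2*t4 + t1*t2*t5 + t1*t3*t4 + t1*t3*t5 + t1*t4*t5
          + t2*t3*t4 + t2*t3*t5 + t2*t4*t5 + t3*t4*t5.
Let e4 := t1*t2*t3*t4 + t1*t2*t3*t5 + t1*t2*t4*t5 + t1*t3*t4*t5 + t2*t3*t4*t5.
Let e5 := t1*t2*t3*t4*t5.

Let q1 := 1 + e1^2 - e2.
Let q0 := e1 * (1 + e1^2 - 2*e2) + e3.

Definition moment_sphere_cofactor (t : R) : R := t^3 + e1 * t^2 + q1 * t + q0.

(* With P(t) = t^5 - e1 t^4 + e2 t^3 - e3 t^2 + e4 t - e5, the cofactor Q is chosen so
   that P Q = t^8 + t^6 + k4 t^4 + k3 t^3 + k2 t^2 + k1 t - e5 q0; the center is then read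
   off by matching coefficients with the expansion of |γ(t) - c|^2 - r^2. *)
Let k1 := e4*q0 - e5*q1.
Let k2 := - e3*q0 + e4*q1 - e5*e1.
Let k3 := e2*q0 - e3*q1 + e4*e1 - e5.
Let k4 := - e1*q0 + e2*q1 - e3*e1 + e4.

Definition moment_sphere_center : R4 := (- k1 / 2, (1 - k2) / 2, - k3 / 2, (1 - k4) / 2).

Definition moment_sphere_sqradius : R := sqdist4 (moment 0) moment_sphere_center + e5 * q0.

Lemma sqdist4_moment_sphere_center t :
  sqdist4 (moment t) moment_sphere_center =
  moment_sphere_sqradius
  + (t - t1) * (t - t2) * (t - t3) * (t - t4) * (t - t5) * moment_sphere_cofactor t.
Proof.
  assert (Hvieta : (t - t1) * (t - t2) * (t - t3) * (t - t4) * (t - t5) =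
                   t^5 - e1 * t^4 + e2 * t^3 - e3 * t^2 + e4 * t - e5).
  { unfold e1, e2, e3, e4, e5; ring. }
  rewrite Hvieta.
  unfold moment_sphere_sqradius, moment_sphere_center, moment_sphere_cofactor, moment; simpl.
  unfold k1, k2, k3, k4, q0, q1; field.
Qed.

Hypotheses (Ht1 : 0 < t1) (Ht2 : 0 < t2) (Ht3 : 0 < t3) (Ht4 : 0 < t4) (Ht5 : 0 < t5).

Let esym_pos : 0 < e1 /\ 0 < e2 /\ 0 < e3 /\ 0 < e5.
Proof.
  unfold e1, e2, e3, e5; repeat split;
    repeat (apply Rplus_lt_0_compat || apply Rmult_lt_0_compat); assumption.
Qed.

Let cofactor_coeffs_pos : 0 < q1 /\ 0 < q0.
Proof.
  destruct esym_pos as (He1 & He2 & He3 & _).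
  assert (Hp2 : 0 < e1^2 - 2*e2).
  { replace (e1^2 - 2*e2) with (t1^2 + t2^2 + t3^2 + t4^2 + t5^2) by (unfold e1, e2; ring).
    pose proof (pow_lt t1 2 Ht1); pose proof (pow_lt t2 2 Ht2); pose proof (pow_lt t3 2 Ht3);
      pose proof (pow_lt t4 2 Ht4); pose proof (pow_lt t5 2 Ht5); lra. }
  unfold q1, q0; split; nra.
Qed.

Lemma moment_sphere_cofactor_pos t : 0 <= t -> 0 < moment_sphere_cofactor t.
Proof.
  intro Ht; destruct esym_pos as (He1 & _), cofactor_coeffs_pos as (Hq1 & Hq0).
  unfold moment_sphere_cofactor.
  pose proof (pow_le t 2 Ht); pose proof (pow_le t 3 Ht); nra.
Qed.

Lemma moment_sphere_sqradius_pos : 0 < moment_sphere_sqradius.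
Proof.
  destruct esym_pos as (_ & _ & _ & He5), cofactor_coeffs_pos as (_ & Hq0).
  unfold moment_sphere_sqradius; pose proof (sqdist4_ge0 (moment 0) moment_sphere_center); nra.
Qed.

End MomentSphere.

Lemma quintic_pos_between_roots t1 t2 t3 t4 t5 t :
  t1 < t2 -> t2 < t3 -> t3 < t4 -> t4 < t5 ->
  t1 < t < t2 \/ t3 < t < t4 \/ t5 < t ->
  0 < (t - t1) * (t - t2) * (t - t3) * (t - t4) * (t - t5).
Proof.
  intros H12 H23 H34 H45 [[Ht1 Ht2] | [[Ht3 Ht4] | Ht5]].
  - replace ((t - t1) * (t - t2) * (t - t3) * (t - t4) * (t - t5))
      with ((t - t1) * (t2 - t) * (t3 - t) * (t4 - t) * (t5 - t)) by ring.
    repeat apply Rmult_lt_0_compat; lra.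
  - replace ((t - t1) * (t - t2) * (t - t3) * (t - t4) * (t - t5))
      with ((t - t1) * (t - t2) * (t - t3) * (t4 - t) * (t5 - t)) by ring.
    repeat apply Rmult_lt_0_compat; lra.
  - repeat apply Rmult_lt_0_compat; lra.
Qed.

Theorem mainTheorem6 (t1 t2 t3 t4 t5 : R) :
  0 < t1 -> t1 < t2 -> t2 < t3 -> t3 < t4 -> t4 < t5 ->
  exists (c : R4) (r : R),
    0 < r /\
    on_sphere c r (moment t1) /\ on_sphere c r (moment t2) /\
    on_sphere c r (moment t3) /\ on_sphere c r (moment t4) /\
    on_sphere c r (moment t5) /\
    (forall (c' : R4) (r' : R), 0 < r' ->
       on_sphere c' r' (moment t1) -> on_sphere c' r' (moment t2) ->
       on_sphere c' r' (moment t3) -> on_sphere c' r' (moment t4) ->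
       on_sphere c' r' (moment t5) -> c' = c /\ r' = r) /\
    (forall t : R,
       (t1 < t < t2 \/ t3 < t < t4 \/ t5 < t) ->
       dist4 (moment t) c > r).
Proof.
  intros H1 H12 H23 H34 H45.
  assert (Hpos : 0 < t2 /\ 0 < t3 /\ 0 < t4 /\ 0 < t5) by lra.
  destruct Hpos as (H2 & H3 & H4 & H5).
  pose proof (moment_sphere_sqradius_pos _ _ _ _ _ H1 H2 H3 H4 H5) as Hrho.
  set (r := sqrt (moment_sphere_sqradius t1 t2 t3 t4 t5)).
  pose proof (sqrt_pos (moment_sphere_sqradius t1 t2 t3 t4 t5)) as Hr.
  exists (moment_sphere_center t1 t2 t3 t4 t5), r.
  assert (Hon : forall t, In t [t1; t2; t3; t4; t5] ->
    on_sphere (moment_sphere_center t1 t2 t3 t4 t5) r (moment t)).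
  { intros t Ht; apply on_sphere_sqdist4; [exact Hr|].
    unfold r; rewrite pow2_sqrt, sqdist4_moment_sphere_center by lra.
    simpl in Ht; decompose [or False] Ht; subst t; ring. }
  split; [apply sqrt_lt_R0; exact Hrho|].
  do 5 (split; [apply Hon; simpl; tauto|]).
  split.
  - intros c' r' Hr' Hon1 Hon2 Hon3 Hon4 Hon5.
    apply (moment_sphere_unique [t1; t2; t3; t4; t5]);
      [repeat constructor; simpl; lra | simpl; lia | exact Hr | lra | exact Hon |].
    intros t Ht; simpl in Ht; decompose [or False] Ht; subst t; assumption.
  - intros t Ht; apply dist4_gt; [exact Hr|].
    unfold r; rewrite pow2_sqrt, sqdist4_moment_sphere_center by lra.
    pose proof (quintic_pos_between_roots _ _ _ _ _ _ H12 H23 H34 H45 Ht).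
    pose proof (moment_sphere_cofactor_pos _ _ _ _ _ H1 H2 H3 H4 H5 t ltac:(lra)).
    nra.
Qed.
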